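(* Let $A,B\in\mathbb{R}^{n\times n}$ be symmetric matrices. Suppose $Q(A)\cap Q(B)=N(A)\cap N(B)$ and $\dim\{N(A)\cap N(B)\}\le n-3$. Let $U$ be a matrix whose columns form a basis of the orthogonal complement of $N(A)\cap N(B)$. Then (a') $II_{\succ}(U^TAU,U^TBU)\neq\emptyset$; (b') $II_{\succeq}(A,B)\neq\emptyset$; (c') $A$ and $B$ are simultaneously diagonalizable via congruence.
   Context: For symmetric matrices $A,B$ of the same size: $II_{\succ}(A,B)=\{(\mu,\sigma)\in\mathbb{R}^2: \mu A+\sigma B\succ 0\}$ (positive definite), $II_{\succeq}(A,B)=\{(\mu,\sigma)\in\mathbb{R}^2: \mu A+\sigma B\succeq 0\}$ (positive semidefinite), $Q(A)=\{v: v^TAv=0\}$, $N(A)=\{v: Av=0\}$. $A$ and $B$ are simultaneously diagonalizable via congruence if there is a nonsingular matrix $C$ such that both $C^TAC$ and $C^TBC$ are diagonal. *)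

From mathcomp Require Import all_boot all_order all_algebra.
From mathcomp Require Import reals.
Set Implicit Arguments. Unset Strict Implicit. Unset Printing Implicit Defensive.
Import Order.TTheory GRing.Theory Num.Theory.
Local Open Scope ring_scope.

Section Defs.
Variable R : realType.

Definition symmx n (A : 'M[R]_n) : Prop := A^T = A.

Definition posdef n (M : 'M[R]_n) : Prop :=
  M^T = M /\ forall v : 'cV[R]_n, v != 0 -> 0 < (v^T *m M *m v) 0 0.
Definition psd n (M : 'M[R]_n) : Prop :=
  M^T = M /\ forall v : 'cV[R]_n, 0 <= (v^T *m M *m v) 0 0.

Definition II_pd n (A B : 'M[R]_n) (p : R * R) : Prop := posdef (p.1 *: A + p.2 *: B).
Definition II_psd n (A B : 'M[R]_n) (p : R * R) : Prop := psd (p.1 *: A + p.2 *: B).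

Definition Qset n (A : 'M[R]_n) (v : 'cV[R]_n) : Prop := v^T *m A *m v = 0.
Definition Nset n (A : 'M[R]_n) (v : 'cV[R]_n) : Prop := A *m v = 0.

(* a matrix whose row space is {v^T : v in N(A) /\ v in N(B)};
   hence dim (N(A) cap N(B)) = \rank (NAB A B) *)
Definition NAB n (A B : 'M[R]_n) : 'M[R]_n := (kermx A^T :&: kermx B^T)%MS.

Definition sim_diag_congr n (A B : 'M[R]_n) : Prop :=
  exists C : 'M[R]_n, C \in unitmx /\
    is_diag_mx (C^T *m A *m C) /\ is_diag_mx (C^T *m B *m C).

End Defs.

From Stdlib Require Import Classical.
From mathcomp Require Import all_boot all_order all_algebra.
From mathcomp Require Import reals complex classical_sets.
From mathcomp Require Import ring lra zify.
Set Implicit Arguments. Unset Strict Implicit. Unset Printing Implicit Defensive.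
Import Order.TTheory GRing.Theory Num.Theory.
Local Open Scope ring_scope.

(* Restricted to the column space of U the pair (A, B) has no common nonzero
   isotropic vector, and that space has dimension at least 3. By Calabi's
   theorem some combination mu A' + sg B' of the restricted forms is then
   positive definite: on the null cone of B' the form A' has constant sign
   (the cone minus the origin is path-connected in dimension >= 3), and if,
   say, A' > 0 there, the supremum t of A'(x)/B'(x) over B'(x) < 0 makes
   A' - t B' semidefinite with kernel transversal to the null cone of B', so
   a further perturbation along B' is definite. Every vector splits as U a + z
   with z a common null vector, so mu A + sg B is semidefinite and its
   isotropic vectors are common null vectors. Such a combination allows
   simultaneous diagonalization by induction on the dimension: pick a common
   generalized eigenvector of the pencil (or a common null vector) and split
   off its orthogonal complement. *)

Section BilinearForms.
Variable R : realType.
Implicit Types (n : nat).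

Definition bform n (A : 'M[R]_n) (x y : 'cV[R]_n) : R := (x^T *m A *m y) 0 0.
Definition qform n (A : 'M[R]_n) (x : 'cV[R]_n) : R := bform A x x.

Lemma bform_sym n (A : 'M[R]_n) x y : symmx A -> bform A x y = bform A y x.
Proof.
move=> sA; rewrite /bform -[in RHS]sA.
have -> : (x^T *m A *m y) 0 0 = ((x^T *m A *m y)^T) 0 0 by rewrite [in RHS]mxE.
by rewrite !trmx_mul trmxK mulmxA.
Qed.

Lemma bformDl n (A : 'M[R]_n) x y z : bform A (x + y) z = bform A x z + bform A y z.
Proof. by rewrite /bform linearD /= !mulmxDl mxE. Qed.

Lemma bformDr n (A : 'M[R]_n) x y z : bform A z (x + y) = bform A z x + bform A z y.
Proof. by rewrite /bform !mulmxDr mxE. Qed.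

Lemma bformZl n (A : 'M[R]_n) a x z : bform A (a *: x) z = a * bform A x z.
Proof. by rewrite /bform linearZ /= -!scalemxAl mxE. Qed.

Lemma bformZr n (A : 'M[R]_n) a x z : bform A z (a *: x) = a * bform A z x.
Proof. by rewrite /bform -!scalemxAr mxE. Qed.

Lemma bformNl n (A : 'M[R]_n) x z : bform A (- x) z = - bform A x z.
Proof. by rewrite -scaleN1r bformZl mulN1r. Qed.

Lemma bformNr n (A : 'M[R]_n) x z : bform A z (- x) = - bform A z x.
Proof. by rewrite -scaleN1r bformZr mulN1r. Qed.

Lemma bform0l n (A : 'M[R]_n) z : bform A 0 z = 0.
Proof. by rewrite /bform trmx0 !mul0mx mxE. Qed.

Lemma qform0 n (A : 'M[R]_n) : qform A 0 = 0.
Proof. exact: bform0l. Qed.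

Lemma bform_comb n (A B : 'M[R]_n) a b x y :
  bform (a *: A + b *: B) x y = a * bform A x y + b * bform B x y.
Proof. by rewrite /bform mulmxDr mulmxDl -!scalemxAr -!scalemxAl !mxE. Qed.

Lemma qform_comb n (A B : 'M[R]_n) a b x :
  qform (a *: A + b *: B) x = a * qform A x + b * qform B x.
Proof. exact: bform_comb. Qed.

Lemma bformZm n (A : 'M[R]_n) a x y : bform (a *: A) x y = a * bform A x y.
Proof. by rewrite /bform -scalemxAr -scalemxAl mxE. Qed.

Lemma qformNm n (A : 'M[R]_n) x : qform (- A) x = - qform A x.
Proof. by rewrite -scaleN1r /qform bformZm mulN1r. Qed.

Lemma symmxN n (A : 'M[R]_n) : symmx A -> symmx (- A).
Proof. by move=> sA; rewrite /symmx linearN /= sA. Qed.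

Lemma bform_mulmxr n (A : 'M[R]_n) x y : bform A x y = bform 1%:M x (A *m y).
Proof. by rewrite /bform mulmx1 mulmxA. Qed.

Lemma bform_kerr n (A : 'M[R]_n) x y : A *m y = 0 -> bform A x y = 0.
Proof. by move=> Ay; rewrite /bform -mulmxA Ay mulmx0 mxE. Qed.

Lemma bform_kerl n (A : 'M[R]_n) x y : symmx A -> A *m x = 0 -> bform A x y = 0.
Proof. by move=> sA Ax; rewrite bform_sym // bform_kerr. Qed.

Lemma qformD n (A : 'M[R]_n) x y : symmx A ->
  qform A (x + y) = qform A x + 2 * bform A x y + qform A y.
Proof. by move=> sA; rewrite /qform !(bformDl, bformDr) (bform_sym y x sA); ring. Qed.

Lemma qformZ n (A : 'M[R]_n) a x : qform A (a *: x) = a ^+ 2 * qform A x.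
Proof. by rewrite /qform bformZl bformZr mulrA -expr2. Qed.

Lemma qformN n (A : 'M[R]_n) x : qform A (- x) = qform A x.
Proof. by rewrite /qform bformNl bformNr opprK. Qed.

Lemma qform_congr n m (A : 'M[R]_n) (W : 'M[R]_(n, m)) c :
  qform (W^T *m A *m W) c = qform A (W *m c).
Proof. by rewrite /qform /bform trmx_mul !mulmxA. Qed.

Lemma qform1E n (x : 'cV[R]_n) : qform 1%:M x = \sum_i x i 0 ^+ 2.
Proof.
by rewrite /qform /bform mulmx1 mxE; apply: eq_bigr => i _; rewrite mxE expr2.
Qed.

Lemma qform1_eq0 n (x : 'cV[R]_n) : qform 1%:M x = 0 -> x = 0.
Proof.
rewrite qform1E => /eqP; rewrite psumr_eq0 => [/allP x0|i _]; last exact: sqr_ge0.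
apply/matrixP => i j; rewrite ord1 mxE; apply/eqP; rewrite -sqrf_eq0.
exact: (implyP (x0 i (mem_index_enum _))).
Qed.

Lemma symmx_comb n (A B : 'M[R]_n) a b :
  symmx A -> symmx B -> symmx (a *: A + b *: B).
Proof. by move=> sA sB; rewrite /symmx linearD !linearZ /= sA sB. Qed.

Lemma symmx_congr n m (A : 'M[R]_n) (W : 'M[R]_(n, m)) :
  symmx A -> symmx (W^T *m A *m W).
Proof. by move=> sA; rewrite /symmx !trmx_mul trmxK sA mulmxA. Qed.

Lemma comb_congr n m (A B : 'M[R]_n) (W : 'M[R]_(n, m)) a b :
  a *: (W^T *m A *m W) + b *: (W^T *m B *m W) = W^T *m (a *: A + b *: B) *m W.
Proof. by rewrite mulmxDr mulmxDl -!scalemxAr -!scalemxAl. Qed.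

End BilinearForms.

Section NullCone.
Variable R : realType.
Implicit Types (n : nat).

Lemma nonneg_quadratic_linear_coef0 (c d : R) : 0 <= d ->
  (forall t : R, 0 <= 2 * t * c + t ^+ 2 * d) -> c = 0.
Proof.
move=> d0 h; have d1 : 0 < d + 1 by lra.
have := h (- c / (d + 1)).
have -> : 2 * (- c / (d + 1)) * c + (- c / (d + 1)) ^+ 2 * d
   = - (c ^+ 2 * (d + 2)) / (d + 1) ^+ 2 by field; rewrite gt_eqF.
rewrite mulNr oppr_ge0 pmulr_lle0 ?invr_gt0 ?exprn_gt0 // pmulr_lle0; last by lra.
by move=> c2; apply/eqP; rewrite -sqrf_eq0 eq_le c2 sqr_ge0.
Qed.

Lemma psd_qform_eq0 n (P : 'M[R]_n) x : psd P -> qform P x = 0 -> P *m x = 0.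
Proof.
move=> [sP hP] qx; apply: qform1_eq0; rewrite /qform -bform_mulmxr.
apply: (nonneg_quadratic_linear_coef0 (hP (P *m x))) => t.
have : 0 <= qform P (x + t *: (P *m x)) := hP _.
rewrite qformD // qx qformZ bformZr.
by rewrite (bform_sym _ _ sP) add0r mulrA.
Qed.

(* The restriction of a quadratic form to the path [u0 + s u1 + s^2 u2] is a
   quartic polynomial in [s], to which the intermediate value theorem applies. *)
Lemma qform_path_root n (A : 'M[R]_n) (u0 u1 u2 : 'cV[R]_n) :
  qform A u0 * qform A (u0 + u1 + u2) <= 0 ->
  exists2 s : R, 0 <= s <= 1 & qform A (u0 + s *: u1 + s ^+ 2 *: u2) = 0.
Proof.
move=> h.
pose p : {poly R} := (bform A u0 u0)%:P + (bform A u0 u1 + bform A u1 u0)%:P * 'X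
  + (bform A u1 u1 + bform A u0 u2 + bform A u2 u0)%:P * 'X^2
  + (bform A u1 u2 + bform A u2 u1)%:P * 'X^3 + (bform A u2 u2)%:P * 'X^4.
have pE s : p.[s] = qform A (u0 + s *: u1 + s ^+ 2 *: u2).
  rewrite /p !hornerD !hornerCM hornerC hornerX !hornerXn /qform.
  by rewrite !(bformDl, bformDr, bformZl, bformZr); ring.
have p0 : p.[0] = qform A u0 by rewrite pE scale0r expr0n /= scale0r !addr0.
have p1 : p.[1] = qform A (u0 + u1 + u2) by rewrite pE expr1n !scale1r.
rewrite -p0 -p1 in h.
have [p0le|p0ge] := lerP p.[0] 0.
  have [p00|p0lt] := eqVneq p.[0] 0; first by exists 0; rewrite ?lexx ?ler01 -?pE.
  have p1ge : 0 <= p.[1] by nra.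
  have [s s01 /eqP ps] := poly_ivt ler01 (introT andP (conj p0le p1ge)).
  by exists s; rewrite // -pE.
have q0 : (- p).[0] <= 0 by rewrite hornerN oppr_le0 ltW.
have q1 : 0 <= (- p).[1] by rewrite hornerN oppr_ge0; nra.
have [s s01 /eqP ps] := poly_ivt ler01 (introT andP (conj q0 q1)).
by exists s; rewrite // -pE -[p.[s]]opprK -hornerN ps oppr0.
Qed.

Lemma qform_segment_root n (S : 'M[R]_n) x y : 0 < qform S x -> qform S y < 0 ->
  exists s : R, qform S (x + s *: (y - x)) = 0 /\ x + s *: (y - x) != 0.
Proof.
move=> Sx Sy.
have [|s s01 Ss] := qform_path_root (A := S) (u0 := x) (u1 := y - x) (u2 := 0).
  by rewrite addr0 addrC subrK; nra.
rewrite scaler0 addr0 in Ss; exists s; split => //; apply/eqP => z0.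
have e : (1 - s) *: x = - (s *: y).
  apply/matrixP => i j; move/matrixP: z0 => /(_ i j); rewrite !mxE; lra.
have := congr1 (qform S) e; rewrite qformN !qformZ => e2.
have h1 : 0 <= (1 - s) ^+ 2 * qform S x by rewrite mulr_ge0 ?sqr_ge0 ?ltW.
have h2 : s ^+ 2 * qform S y <= 0 by rewrite mulr_ge0_le0 ?sqr_ge0 ?ltW.
have /eqP : (1 - s) ^+ 2 * qform S x = 0 by lra.
have /eqP : s ^+ 2 * qform S y = 0 by lra.
rewrite !mulf_eq0 (gt_eqF Sx) (lt_eqF Sy) !orbF !orbb => /eqP ->.
by rewrite subr0 oner_eq0.
Qed.

Lemma exists_nonzero_orthogonal2 n (a b : 'rV[R]_n) : (2 < n)%N ->
  exists2 w : 'cV[R]_n, w != 0 & a *m w = 0 /\ b *m w = 0.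
Proof.
move=> n2; pose K := kermx (col_mx a b)^T.
have rK : (0 < \rank K)%N.
  rewrite /K mxrank_ker subn_gt0; apply: leq_ltn_trans n2.
  exact: rank_leq_col.
have [i Ki] : exists i, row i K != 0.
  apply/existsP; apply: contraLR rK; rewrite negb_exists => /forallP K0.
  suff -> : K = 0 by rewrite mxrank0.
  by apply/row_matrixP => i; rewrite row0; apply/eqP; move: (K0 i); rewrite negbK.
exists (row i K)^T; first by rewrite trmx_eq0.
have : row i K *m (col_mx a b)^T = 0 by apply/sub_kermxP; rewrite row_sub.
move=> /(congr1 trmx); rewrite trmx_mul trmxK trmx0 mul_col_mx => /eqP.
by rewrite col_mx_eq0 => /andP[/eqP -> /eqP ->].
Qed.

(* Along [z s = (1 - s)^2 x + e s^2 y + r s (1 - s) w] the form [qform B] equals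
   [s^2 (1 - s)^2 (r^2 qform B w + 2 e bform B x y) = 0], while [qform A z]
   changes sign between [s = 0] and [s = 1]. *)
Lemma common_zero_on_null_path n (A B : 'M[R]_n) x y w (e r : R) : symmx B ->
  qform B x = 0 -> qform B y = 0 -> bform B x w = 0 -> bform B y w = 0 ->
  r ^+ 2 * qform B w + 2 * e * bform B x y = 0 -> e ^+ 2 = 1 ->
  bform B x y != 0 -> qform A x * qform A y < 0 ->
  exists2 z, z != 0 & qform A z = 0 /\ qform B z = 0.
Proof.
move=> sB Bx By Bxw Byw hr he Bxy Axy.
have [|s s01 Az] := qform_path_root (A := A) (u0 := x)
  (u1 := - (2 : R) *: x + r *: w) (u2 := x + e *: y - r *: w).
  have -> : x + (- (2 : R) *: x + r *: w) + (x + e *: y - r *: w) = e *: y.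
    by apply/matrixP => i j; rewrite !mxE; ring.
  by rewrite qformZ he mul1r ltW.
set z := _ + _ in Az.
have Bwx : bform B w x = 0 by rewrite bform_sym.
have Bwy : bform B w y = 0 by rewrite bform_sym.
have Byx : bform B y x = bform B x y by rewrite bform_sym.
have Bzx : bform B z x = e * s ^+ 2 * bform B x y.
  by rewrite /z !(bformDl, bformZl, bformNl) -!/(qform B _) Bx Bwx Byx; ring.
have Bzy : bform B z y = (1 - s) ^+ 2 * bform B x y.
  by rewrite /z !(bformDl, bformZl, bformNl) -!/(qform B _) By Bwy; ring.
exists z; last split => //.
  apply/eqP => z0; move: Bzx Bzy; rewrite z0 !bform0l => /esym/eqP h1 /esym/eqP h2.
  have /eqP s1 : (1 - s) ^+ 2 == 0 by move: h2; rewrite mulf_eq0 (negbTE Bxy) orbF.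
  have : e * s ^+ 2 == 0 by move: h1; rewrite mulf_eq0 (negbTE Bxy) orbF.
  rewrite mulf_eq0 => /orP[/eqP e0|/eqP s0]; last by nra.
  by move: he; rewrite e0 expr0n /= => /eqP; rewrite eq_sym oner_eq0.
rewrite /qform /z !(bformDl, bformDr, bformZl, bformZr, bformNl, bformNr).
rewrite -!/(qform B _) Bx By Bxw Byw Bwx Bwy Byx.
transitivity (s ^+ 2 * (1 - s) ^+ 2 * (r ^+ 2 * qform B w + 2 * e * bform B x y)).
  by ring.
by rewrite hr mulr0.
Qed.

(* The null cone minus the origin is connected by segments and by the paths of
   [common_zero_on_null_path]; [n >= 3] provides the auxiliary vector [w]. *)
Lemma null_cone_sign_constant n (A B : 'M[R]_n) x y : (2 < n)%N -> symmx B -> (forall z, qform A z = 0 -> qform B z = 0 -> z = 0) ->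
  qform B x = 0 -> qform B y = 0 -> 0 < qform A x -> qform A y < 0 -> False.
Proof.
move=> n2 sB nc Bx By Ax Ay.
have orth u v : 0 < qform A u -> qform A v < 0 -> qform B u = 0 ->
    qform B v = 0 -> bform B u v = 0 -> False.
  move=> Au Av Bu Bv Buv; have [s [Az z0]] := qform_segment_root Au Av.
  move/eqP: z0; apply; apply: nc => //.
  rewrite /qform !(bformDl, bformDr, bformZl, bformZr, bformNl, bformNr).
  by rewrite -!/(qform B _) Bu Bv Buv (bform_sym v u sB) Buv; ring.
have [Bxy|Bxy] := eqVneq (bform B x y) 0; first exact: (orth x y).
have [w w0 [xw yw]] := exists_nonzero_orthogonal2 (x^T *m B) (y^T *m B) n2.
have Bxw : bform B x w = 0 by rewrite /bform xw mxE.
have Byw : bform B y w = 0 by rewrite /bform yw mxE.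
have [Bw|Bw] := eqVneq (qform B w) 0.
  have [Aw|Aw] := ltrP (qform A w) 0; first exact: (orth x w).
  have {}Aw : 0 < qform A w.
    rewrite lt_neqAle Aw andbT eq_sym; apply: contra w0 => /eqP Aw0.
    by apply/eqP; apply: nc.
  by apply: (orth w y) => //; rewrite bform_sym.
have Axy : qform A x * qform A y < 0 by nra.
pose c := - (2 * bform B x y) / qform B w.
have cBw : c * qform B w = - (2 * bform B x y) by rewrite /c mulrVK // unitfE.
suff [z z0 [Az Bz]] : exists2 z, z != 0 & qform A z = 0 /\ qform B z = 0.
  by move/eqP: z0; apply; apply: nc.
have [c0|c0] := lerP 0 c.
  apply: (common_zero_on_null_path (e := 1) (r := Num.sqrt c) sB Bx By Bxw Byw
    _ _ Bxy Axy); last exact: expr1n.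
  by rewrite sqr_sqrtr // cBw mulr1 addNr.
apply: (common_zero_on_null_path (e := -1) (r := Num.sqrt (- c)) sB Bx By Bxw Byw
  _ _ Bxy Axy); last by rewrite sqrrN expr1n.
by rewrite sqr_sqrtr ?oppr_ge0 ?ltW // mulNr cBw opprK; ring.
Qed.

End NullCone.

Section PencilEigenvector.
Variable R : realType.
Implicit Types (n : nat).

Lemma unitmx_col_inj n (M : 'M[R]_n) :
  (forall c : 'cV_n, M *m c = 0 -> c = 0) -> M \in unitmx.
Proof.
move=> Minj; rewrite -unitmx_tr -row_free_unit -kermx_eq0.
apply/eqP/row_matrixP => i; rewrite row0; apply/trmx_inj; rewrite trmx0.
apply: Minj; have : row i (kermx M^T) *m M^T = 0 by apply/sub_kermxP; exact: row_sub.
by move/(congr1 trmx); rewrite trmx_mul trmxK trmx0.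
Qed.

Lemma posdef_unitmx n (P : 'M[R]_n) : posdef P -> P \in unitmx.
Proof.
move=> [_ hP]; apply: unitmx_col_inj => c Pc; apply/eqP; apply: contraT => c0.
by have := hP c c0; rewrite -/(bform _ _ _) bform_kerr // ltxx.
Qed.

Local Notation C := R[i].

Definition remx m p (z : 'M[C]_(m, p)) : 'M[R]_(m, p) := map_mx (@complex.Re R) z.
Definition immx m p (z : 'M[C]_(m, p)) : 'M[R]_(m, p) := map_mx (@complex.Im R) z.

Lemma complex_ReD : {morph @complex.Re R : x y / x + y}.
Proof. by move=> [? ?] [? ?]. Qed.

Lemma complex_ImD : {morph @complex.Im R : x y / x + y}.
Proof. by move=> [? ?] [? ?]. Qed.

Lemma remx_mulmx m p q (z : 'M[C]_(m, p)) (X : 'M[R]_(p, q)) :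
  remx (z *m map_mx (real_complex R) X) = remx z *m X.
Proof.
apply/matrixP => i j; rewrite !mxE (big_morph _ complex_ReD (erefl (complex.Re (0 : C)))).
by apply: eq_bigr => k _; rewrite !mxE; case: (z i k) => a b /=; rewrite mulr0 subr0.
Qed.

Lemma immx_mulmx m p q (z : 'M[C]_(m, p)) (X : 'M[R]_(p, q)) :
  immx (z *m map_mx (real_complex R) X) = immx z *m X.
Proof.
apply/matrixP => i j; rewrite !mxE (big_morph _ complex_ImD (erefl (complex.Im (0 : C)))).
by apply: eq_bigr => k _; rewrite !mxE; case: (z i k) => a b /=; rewrite mulr0 add0r.
Qed.

Lemma remx_scale m p (l : C) (z : 'M[C]_(m, p)) :
  remx (l *: z) = complex.Re l *: remx z - complex.Im l *: immx z.
Proof. by apply/matrixP => i j; rewrite !mxE; case: l => a b; case: (z i j). Qed.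

Lemma immx_scale m p (l : C) (z : 'M[C]_(m, p)) :
  immx (l *: z) = complex.Re l *: immx z + complex.Im l *: remx z.
Proof.
apply/matrixP => i j; rewrite !mxE; case: l => a b; case: (z i j) => c d /=.
by rewrite addrC.
Qed.

Lemma reim_eq0 m p (z : 'M[C]_(m, p)) : remx z = 0 -> immx z = 0 -> z = 0.
Proof.
move=> /matrixP zr /matrixP zi; apply/matrixP => i j; have := zr i j; have := zi i j.
by rewrite !mxE; case: (z i j) => a b /= -> ->.
Qed.

(* A complex eigenvector [w] of [P^-1 S] has real and imaginary parts [a], [b]
   with [S a = Re l P a - Im l P b] and [S b = Re l P b + Im l P a]; the symmetry
   of [S] and [P] then forces [Im l (a' P a + b' P b) = 0], so [l] is real. *)
Lemma posdef_pencil_eigenvector n (P S : 'M[R]_n.+1) : posdef P -> symmx S ->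
  exists (l : R) (v : 'cV[R]_n.+1), v != 0 /\ S *m v = l *: (P *m v).
Proof.
move=> Ppd sS; have [sP hP] := Ppd; have Pu := posdef_unitmx Ppd.
pose phi := map_mx (real_complex R).
have [lam /eigenvalueP [u uPS u0]] :=
  @eigenvalue_closed C n.+1 (phi _ _ (invmx P *m S)) (ltn0Sn n).
pose w := u *m phi _ _ (invmx P).
have wP : w *m phi _ _ P = u by rewrite /w -mulmxA -map_mxM mulVmx // map_mx1 mulmx1.
have wS : w *m phi _ _ S = lam *: (w *m phi _ _ P) by rewrite wP -uPS /w -mulmxA -map_mxM.
have w0 : w != 0 by apply: contraNneq u0 => w0; rewrite -wP w0 mul0mx.
clearbody w; set a := (remx w)^T; set b := (immx w)^T.
have Sa : S *m a = complex.Re lam *: (P *m a) - complex.Im lam *: (P *m b).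
  have := congr1 (@remx _ _) wS; rewrite remx_mulmx remx_scale !remx_mulmx immx_mulmx.
  move=> /(congr1 trmx); rewrite !linearD !linearZ /= !linearN !linearZ /=.
  by rewrite !trmx_mul sS sP scalerN.
have Sb : S *m b = complex.Re lam *: (P *m b) + complex.Im lam *: (P *m a).
  have := congr1 (@immx _ _) wS; rewrite immx_mulmx immx_scale !immx_mulmx remx_mulmx.
  by move=> /(congr1 trmx); rewrite !linearD !linearZ /= !trmx_mul sS sP.
have ab0 : (a != 0) || (b != 0).
  apply: contraNT w0; rewrite negb_or !negbK => /andP[/eqP a0 /eqP b0].
  by apply/eqP/reim_eq0; apply: trmx_inj; rewrite trmx0.
have qP_ge0 x : 0 <= qform P x.
  by have [->|x0] := eqVneq x 0; [rewrite qform0 | exact/ltW/hP].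
have Pab : 0 < qform P a + qform P b.
  by case/orP: ab0 => ?; [apply: ltr_pwDl | apply: ltr_pwDr]; rewrite ?qP_ge0 ?hP.
have Sba : bform S b a = complex.Re lam * bform P b a - complex.Im lam * qform P b.
  by rewrite bform_mulmxr Sa bformDr bformNr !bformZr -!bform_mulmxr.
have Sab : bform S a b = complex.Re lam * bform P a b + complex.Im lam * qform P a.
  by rewrite bform_mulmxr Sb bformDr !bformZr -!bform_mulmxr.
have im0 : complex.Im lam = 0.
  rewrite (bform_sym b a sS) (bform_sym b a sP) Sab in Sba.
  have /eqP : complex.Im lam * (qform P a + qform P b) = 0 by lra.
  by rewrite mulf_eq0 (gt_eqF Pab) orbF => /eqP.
case/orP: ab0 => ?; [exists (complex.Re lam), a | exists (complex.Re lam), b].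
  by rewrite Sa im0 scale0r subr0.
by rewrite Sb im0 scale0r addr0.
Qed.

End PencilEigenvector.

Section SimultaneousDiagonalization.
Variable R : realType.
Implicit Types (n : nat).

Lemma cV_neq0 n (v : 'cV[R]_n) : v != 0 -> exists j, v j 0 != 0.
Proof.
move=> v0; have [j vj|v_eq0] := pickP (fun j => v j 0 != 0); first by exists j.
by case/eqP: v0; apply/matrixP => i k; rewrite ord1 mxE; move: (v_eq0 i) => /negbFE/eqP.
Qed.

(* [W] is the projection [1 - v f / (f v)] onto [ker f], restricted to the
   coordinates other than one where [v] does not vanish. *)
Lemma kernel_complement n (v : 'cV[R]_n.+1) (f : 'rV[R]_n.+1) : (f *m v) 0 0 != 0 ->
  exists2 W : 'M[R]_(n.+1, n), f *m W = 0 & row_mx v W \in unitmx.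
Proof.
set fv := (f *m v) 0 0 => fv0.
have [j vj] : exists j, v j 0 != 0.
  by apply: cV_neq0; apply: contraNneq fv0 => v0; rewrite /fv v0 mulmx0 mxE.
pose Pi : 'M[R]_n.+1 := 1%:M - fv^-1 *: (v *m f).
pose E : 'M[R]_(n.+1, n) := \matrix_(i, k) (i == lift j k)%:R.
have fvE : f *m v = fv%:M by apply: mx11_scalar.
have fPi : f *m Pi = 0.
  rewrite /Pi mulmxBr mulmx1 -scalemxAr mulmxA fvE mul_scalar_mx scalerA mulVf //.
  by rewrite scale1r subrr.
exists (Pi *m E); first by rewrite mulmxA fPi mul0mx.
apply: unitmx_col_inj => c hc.
pose c1 := @usubmx _ 1 n 1 c; pose c2 := @dsubmx _ 1 n 1 c.
have h : v *m c1 + (Pi *m E) *m c2 = 0 by rewrite -mul_row_col /c1 /c2 vsubmxK.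
rewrite -[c](@vsubmxK _ 1 n 1) -/c1 -/c2; clearbody c1 c2.
have c10 : c1 = 0.
  have := congr1 (mulmx f) h; rewrite mulmx0 mulmxDr mulmxA fvE mul_scalar_mx.
  by rewrite !mulmxA fPi !mul0mx addr0 => /eqP; rewrite scaler_eq0 (negbTE fv0) => /eqP.
move: h; rewrite c10 mulmx0 add0r => h.
have Ec2 : E *m c2 = fv^-1 *: (v *m (f *m (E *m c2))).
  apply/eqP; rewrite -subr_eq0; apply/eqP; rewrite -[RHS]h.
  by rewrite -mulmxA /Pi mulmxBl mul1mx -scalemxAl !mulmxA.
have Ec2j : (E *m c2) j 0 = 0.
  rewrite mxE big1 // => k _; rewrite mxE.
  by have := neq_lift j k; rewrite eq_sym => /negbTE ->; rewrite mul0r.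
have fEc2 : (f *m (E *m c2)) 0 0 = 0.
  move: Ec2j; rewrite {1}Ec2 mxE mxE big_ord1.
  by move/eqP; rewrite !mulf_eq0 invr_eq0 (negbTE fv0) (negbTE vj) => /eqP.
have {}Ec2 : E *m c2 = 0.
  rewrite Ec2 (mx11_scalar (f *m (E *m c2))) fEc2.
  by rewrite mul_mx_scalar scale0r scaler0.
suff -> : c2 = 0 by rewrite col_mx0.
apply/matrixP => k z; rewrite ord1 mxE.
move/matrixP: Ec2 => /(_ (lift j k) 0); rewrite !mxE (bigD1 k) //= big1.
  by rewrite mxE eqxx mul1r addr0.
by move=> k' kk'; rewrite mxE (inj_eq (@lift_inj _ j)) eq_sym (negbTE kk') mul0r.
Qed.

Lemma orth_kernel_mulmx n (M : 'M[R]_n.+1) v (W : 'M[R]_(n.+1, n)) (f : 'rV_n.+1) :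
  f *m W = 0 -> (forall w, f *m w = 0 -> bform M v w = 0) -> v^T *m M *m W = 0.
Proof.
move=> fW vf; apply/matrixP => i k; rewrite ord1.
have := vf (col k W); rewrite colE mulmxA fW mul0mx => /(_ erefl).
have -> : (v^T *m M *m W) 0 k = (col k (v^T *m M *m W)) 0 0 by rewrite [RHS]mxE.
by rewrite /bform colE !mulmxA => ->; rewrite mxE.
Qed.

Lemma congr_row_mx_block n (M : 'M[R]_n.+1) v (W : 'M[R]_(n.+1, n)) (C1 : 'M[R]_n) :
  symmx M -> v^T *m M *m W = 0 ->
  let C := row_mx v W *m block_mx (1%:M : 'M_1) 0 0 C1 in
  C^T *m M *m C = block_mx (v^T *m M *m v) 0 0 (C1^T *m (W^T *m M *m W) *m C1).
Proof.
move=> sM vW C.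
have Wv : W^T *m M *m v = 0.
  by apply: trmx_inj; rewrite !trmx_mul trmxK sM mulmxA vW trmx0.
have -> : C^T *m M *m C = block_mx (1%:M : 'M_1) 0 0 C1^T *m
    (col_mx v^T W^T *m M *m row_mx v W) *m block_mx (1%:M : 'M_1) 0 0 C1.
  by rewrite /C trmx_mul tr_row_mx tr_block_mx !trmx0 trmx1 !mulmxA.
rewrite mul_col_mx mul_col_row vW Wv !mulmx_block.
by rewrite !(mul0mx, mulmx0, addr0, add0r, mul1mx, mulmx1).
Qed.

Lemma pencil_common_eigenvector n (A B : 'M[R]_n.+1) mu sg :
  symmx A -> symmx B -> posdef (mu *: A + sg *: B) ->
  exists (v : 'cV[R]_n.+1) (a b : R), v != 0 /\
    A *m v = a *: ((mu *: A + sg *: B) *m v) /\ B *m v = b *: ((mu *: A + sg *: B) *m v).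
Proof.
set P := mu *: A + sg *: B => sA sB Ppd.
have PvE v : P *m v = mu *: (A *m v) + sg *: (B *m v) by rewrite mulmxDl -!scalemxAl.
have [sg0|sg0] := eqVneq sg 0.
  have [l [v [v0 Bv]]] := posdef_pencil_eigenvector Ppd sB.
  have mu0 : mu != 0.
    apply/eqP => mu0.
    by have := Ppd.2 v v0; rewrite /P mu0 sg0 !scale0r addr0 mulmx0 mul0mx mxE ltxx.
  exists v, mu^-1, l; split => //; split => //.
  by rewrite PvE sg0 scale0r addr0 scalerA mulVf // scale1r.
have [l [v [v0 Av]]] := posdef_pencil_eigenvector Ppd sA.
exists v, l, (sg^-1 * (1 - mu * l)); split => //; split => //.
rewrite -scalerA -[B *m v](scalerK sg0); congr (_ *: _).
by rewrite scalerBl scale1r -scalerA -Av PvE addrAC subrr add0r.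
Qed.

Lemma exists_splitting_vector n (A B : 'M[R]_n.+1) mu sg :
  symmx A -> symmx B -> psd (mu *: A + sg *: B) ->
  (forall x, qform (mu *: A + sg *: B) x = 0 -> A *m x = 0 /\ B *m x = 0) ->
  exists (v : 'cV[R]_n.+1) (f : 'rV_n.+1), (f *m v) 0 0 != 0 /\
    (forall w, f *m w = 0 -> bform A v w = 0 /\ bform B v w = 0).
Proof.
set P := mu *: A + sg *: B => sA sB [sP hP] Pker.
have [[v [v0 [Av Bv]]]|common0] :=
    classic (exists v : 'cV[R]_n.+1, v != 0 /\ A *m v = 0 /\ B *m v = 0).
  exists v, v^T; split => [|w _]; last by split; apply: bform_kerl.
  by apply: contra v0 => /eqP v2; apply/eqP/qform1_eq0; rewrite /qform /bform mulmx1.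
have Ppd : posdef P.
  split=> // x x0; rewrite lt_neqAle hP andbT; apply/eqP => /esym /Pker [Ax Bx].
  by apply: common0; exists x.
have [v [a [b [v0 [Av Bv]]]]] := pencil_common_eigenvector sA sB Ppd.
have bformE M : symmx M -> forall w, bform M v w = ((M *m v)^T *m w) 0 0.
  by move=> sM w; rewrite /bform trmx_mul sM.
exists v, (P *m v)^T; split.
  by rewrite -bformE // gt_eqF //; apply: Ppd.2.
by move=> w Pw; rewrite !bformE // Av Bv !linearZ /= -!scalemxAl Pw !scaler0 mxE.
Qed.

(* Induction on the dimension: split off [v] together with the kernel [W] of
   the functional [f] given by [exists_splitting_vector]. *)
Lemma sim_diag_congr_psd_comb n (A B : 'M[R]_n) mu sg :
  symmx A -> symmx B -> psd (mu *: A + sg *: B) ->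
  (forall x, qform (mu *: A + sg *: B) x = 0 -> A *m x = 0 /\ B *m x = 0) ->
  sim_diag_congr A B.
Proof.
elim: n A B => [|n IH] A B sA sB Ppsd Pker.
  by exists 1%:M; split; [exact: unitmx1 | split; apply/is_diag_mxP => -[]].
have [v [f [fv0 vf]]] := exists_splitting_vector sA sB Ppsd Pker.
have [W fW vWu] := kernel_complement fv0.
have Ppsd' : psd (mu *: (W^T *m A *m W) + sg *: (W^T *m B *m W)).
  rewrite comb_congr; split; first exact/symmx_congr/Ppsd.1.
  move=> c; change (0 <= qform (W^T *m (mu *: A + sg *: B) *m W) c).
  by rewrite qform_congr; apply: Ppsd.2.
have Pker' c : qform (mu *: (W^T *m A *m W) + sg *: (W^T *m B *m W)) c = 0 ->
    W^T *m A *m W *m c = 0 /\ W^T *m B *m W *m c = 0.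
  by rewrite comb_congr qform_congr => /Pker [Ac Bc]; rewrite -!mulmxA Ac Bc !mulmx0.
have [C1 [C1u [dA dB]]] :=
  IH _ _ (symmx_congr W sA) (symmx_congr W sB) Ppsd' Pker'.
exists (row_mx v W *m block_mx (1%:M : 'M_1) 0 0 C1); split.
  have C1bu : block_mx (1%:M : 'M_1) 0 0 C1 \in unitmx.
    by rewrite unitmxE det_ublock det1 mul1r -unitmxE.
  by rewrite unitmx_mul vWu C1bu.
rewrite (congr_row_mx_block _ sA (orth_kernel_mulmx fW (fun w fw => (vf w fw).1))).
rewrite (congr_row_mx_block _ sB (orth_kernel_mulmx fW (fun w fw => (vf w fw).2))).
have diag_block (a : 'M[R]_1) (D : 'M[R]_n) : is_diag_mx D -> is_diag_mx (block_mx a 0 0 D).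
  by move=> dD; rewrite is_diag_block_mx // !eqxx mx11_is_diag dD.
by split; apply: diag_block.
Qed.

End SimultaneousDiagonalization.

Section Perturbation.
Variable R : realType.
Implicit Types (n : nat).

Lemma qform_delta_mx n (D : 'M[R]_n) i : qform D (delta_mx i 0) = D i i.
Proof. by rewrite /qform /bform trmx_delta -rowE -colE !mxE. Qed.

Lemma qform_diag_mx n (D : 'M[R]_n) y : is_diag_mx D ->
  qform D y = \sum_i D i i * y i 0 ^+ 2.
Proof.
move=> /is_diag_mxP D0; rewrite /qform /bform mxE; apply: eq_bigr => i _.
rewrite mxE (bigD1 i) //= big1 ?addr0; first by rewrite !mxE; ring.
by move=> j ji; rewrite mxE D0 ?mulr0 // eq_sym.
Qed.

Lemma qform_diag_mx_gt0 n (D : 'M[R]_n) y : is_diag_mx D ->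
  (forall i, 0 < D i i) -> y != 0 -> 0 < qform D y.
Proof.
move=> dD D0 y0; have [j yj] := cV_neq0 y0; rewrite qform_diag_mx // (bigD1 j) //=.
apply: ltr_pwDl; first by rewrite mulr_gt0 // exprn_even_gt0.
by apply: sumr_ge0 => i _; rewrite mulr_ge0 ?sqr_ge0 ?ltW.
Qed.

(* In a basis diagonalizing both [P] and [S], [P + e S] has diagonal entries
   [d_i + e s_i >= d_i (1 - e T) = e d_i > 0], where [T = \sum_i |s_i| / d_i]
   and [e = 1 / (1 + T)]. *)
Lemma posdef_add_small n (P S : 'M[R]_n) : posdef P -> symmx S ->
  exists2 e : R, 0 < e & posdef (P + e *: S).
Proof.
move=> Ppd sS; have [sP hP] := Ppd.
have [C [Cu [dP dS]]] : sim_diag_congr P S.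
  apply: (sim_diag_congr_psd_comb (mu := 1) (sg := 0)) => //;
    rewrite scale1r scale0r addr0.
    by split=> // x; have [->|x0] := eqVneq x 0; [rewrite mulmx0 mxE | exact/ltW/hP].
  move=> x Px; have [->|x0] := eqVneq x 0; first by rewrite !mulmx0.
  by have := hP x x0; rewrite -/(bform _ _ _) -/(qform _ _) Px ltxx.
move: dP dS; set D1 := C^T *m P *m C; set D2 := C^T *m S *m C => dP dS.
have D1_gt0 i : 0 < D1 i i.
  rewrite -qform_delta_mx qform_congr; apply: hP.
  apply/eqP => /(congr1 (mulmx (invmx C))); rewrite mulKmx // mulmx0.
  by move=> /matrixP /(_ i 0) /eqP; rewrite !mxE !eqxx oner_eq0.
pose T := \sum_i `|D2 i i| / D1 i i.
have T0 : 0 <= T by apply: sumr_ge0 => i _; rewrite divr_ge0 // ltW.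
have T1 : 0 < 1 + T by rewrite ltr_wpDr.
pose e := (1 + T)^-1.
have e0 : 0 < e by rewrite invr_gt0.
have eT : e * T = 1 - e by rewrite /e; field; rewrite gt_eqF.
exists e => //; split; first by rewrite -[P]scale1r symmx_comb.
move=> x x0; pose y := invmx C *m x.
have xE : x = C *m y by rewrite /y mulKVmx.
have y0 : y != 0 by apply: contra x0; rewrite xE => /eqP ->; rewrite mulmx0.
rewrite -/(bform _ _ _) -/(qform _ _) xE -qform_congr -[P]scale1r -comb_congr -/D1 -/D2.
clearbody D1 D2; apply: qform_diag_mx_gt0 => //.
  by apply/is_diag_mxP => i j ij; rewrite !mxE (is_diag_mxP dP) ?(is_diag_mxP dS) // !mulr0 addr0.
move=> i; rewrite !mxE mul1r.
have Di : `|D2 i i| / D1 i i <= T.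
  by rewrite /T (bigD1 i) //= lerDl; apply: sumr_ge0 => j _; rewrite divr_ge0 // ltW.
have : e * (`|D2 i i| / D1 i i) * D1 i i <= e * T * D1 i i.
  by rewrite ler_pM2r // ler_pM2l.
rewrite -mulrA divfK ?gt_eqF // eT => eD2.
have : e * - D2 i i <= e * `|D2 i i| by rewrite ler_pM2l // -normrN ler_norm.
have := mulr_gt0 e0 (D1_gt0 i); lra.
Qed.

Lemma addsmx_decomp n m1 m2 (X : 'M[R]_(m1, n)) (Y : 'M[R]_(m2, n)) :
  (n <= \rank X + \rank Y)%N ->
  (forall u : 'rV[R]_n, (u <= X)%MS -> (u <= Y)%MS -> u = 0) ->
  forall x : 'rV[R]_n, exists a b, x = a *m X + b *m Y.
Proof.
move=> XY XY0 x.
have cap0 : (X :&: Y)%MS = 0.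
  apply/row_matrixP => i; rewrite row0.
  by have := row_sub i (X :&: Y)%MS; rewrite sub_capmx => /andP[]; apply: XY0.
have /sub_addsmxP [[a b] /= ->] : (x <= X + Y)%MS.
  apply/submx_full; rewrite -col_leq_rank.
  by have := mxrank_sum_cap X Y; rewrite cap0 mxrank0 addn0 => ->.
by exists a, b.
Qed.

(* The complement is the [S]-orthogonal of [ker P]: it meets [ker P] trivially
   because [S] is definite there, and it has codimension at most [dim ker P]. *)
Lemma psd_kernel_complement n (P S : 'M[R]_n) : psd P -> symmx S ->
  (forall x, x != 0 -> P *m x = 0 -> 0 < qform S x) ->
  exists m (L : 'M[R]_(n, m)), (forall c, c != 0 -> 0 < qform P (L *m c)) /\
    forall x, exists k c, x = k + L *m c /\ P *m k = 0 /\ bform S k (L *m c) = 0.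
Proof.
move=> Ppsd sS Sker; have sP := Ppsd.1.
pose Kr := kermx P; pose Lr := kermx (Kr *m S)^T.
have KrP (u : 'rV[R]_n) : (u <= Kr)%MS = (P *m u^T == 0).
  by rewrite -trmx_eq0 trmx_mul trmxK sP; apply/sub_kermxP/eqP.
have LrS (u : 'rV[R]_n) : (u <= Lr)%MS -> Kr *m S *m u^T = 0.
  by move/sub_kermxP/(congr1 trmx); rewrite trmx_mul trmxK trmx0.
have rkKL : (n <= \rank Kr + \rank Lr)%N.
  rewrite /Lr mxrank_ker mxrank_tr.
  by have := mxrankM_maxl Kr S; have := rank_leq_col (Kr *m S); lia.
clearbody Kr Lr.
have KrLr (u : 'rV[R]_n) : (u <= Kr)%MS -> (u <= Lr)%MS -> u = 0.
  move=> uK uL; apply/trmx_inj; rewrite trmx0; apply/eqP; apply: contraT => u0.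
  have Pu : P *m u^T = 0 by apply/eqP; rewrite -KrP.
  have /submxP [c uE] := uK; have := Sker _ u0 Pu.
  by rewrite /qform /bform trmxK {1}uE -!mulmxA (mulmxA Kr) (LrS _ uL) mulmx0 mxE ltxx.
have LrE := eq_row_base Lr.
exists (\rank Lr), (row_base Lr)^T; split.
  move=> c c0; rewrite lt_neqAle Ppsd.2 andbT.
  apply/eqP => /esym /(psd_qform_eq0 Ppsd) /eqP.
  rewrite -[_ *m c]trmxK -KrP trmx_mul trmxK => cK.
  have : c^T *m row_base Lr = 0.
    by apply: KrLr cK _; rewrite (submx_trans (submxMl _ _)) ?LrE.
  by move/eqP; rewrite mulmx_free_eq0 ?row_base_free // trmx_eq0 (negbTE c0).
move=> x; have [a [b xE]] := addsmx_decomp rkKL KrLr x^T.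
have /submxP [c bE] : (b *m Lr <= row_base Lr)%MS by rewrite (submx_trans (submxMl _ _)) ?LrE.
exists (a *m Kr)^T, c^T; split.
  by rewrite -[x]trmxK xE bE linearD /= !trmx_mul.
split; first by apply/eqP; rewrite -KrP submxMl.
rewrite /bform trmxK -(mulmxA a) -mulmxA -[_ *m c^T]trmxK trmx_mul !trmxK.
by rewrite LrS ?mulmx0 ?mxE // (submx_trans (submxMl _ _)) ?LrE.
Qed.

Lemma psd_add_posdef n (P S : 'M[R]_n) : psd P -> symmx S ->
  (forall x, x != 0 -> P *m x = 0 -> 0 < qform S x) ->
  exists e : R, posdef (P + e *: S).
Proof.
move=> Ppsd sS Sker; have sP := Ppsd.1.
have [m [L [LP xE]]] := psd_kernel_complement Ppsd sS Sker.
have [e e0 [_ PSpd]] : exists2 e : R, 0 < e & posdef (L^T *m P *m L + e *: (L^T *m S *m L)).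
  apply: posdef_add_small (symmx_congr L sS); split; first exact: symmx_congr.
  by move=> c c0; rewrite -/(bform _ _ _) -/(qform _ _) qform_congr LP.
exists e; split => [|x x0]; first by rewrite -[P]scale1r symmx_comb.
have [k [c [xkc [Pk Skc]]]] := xE x; subst x.
have {}PSpd d : d != 0 -> 0 < qform (L^T *m (1 *: P + e *: S) *m L) d.
  by rewrite -comb_congr scale1r; apply: PSpd.
have qE : qform (1 *: P + e *: S) (k + L *m c)
    = e * qform S k + qform (L^T *m (1 *: P + e *: S) *m L) c.
  rewrite qformD ?qform_congr ?(qform_comb, bform_comb); last exact: symmx_comb.
  by rewrite /qform !(bform_kerl _ sP Pk) Skc; ring.
rewrite -/(bform _ _ _) -/(qform _ _) -[P]scale1r qE.
have qc : 0 <= qform (L^T *m (1 *: P + e *: S) *m L) c.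
  by have [->|c0] := eqVneq c 0; [rewrite qform0 | exact/ltW/PSpd].
have [k0|k0] := eqVneq k 0.
  rewrite k0 qform0 mulr0 add0r; apply: PSpd.
  by apply: contra x0 => /eqP c0; rewrite k0 c0 mulmx0 addr0.
by rewrite ltr_pwDl // mulr_gt0 // Sker.
Qed.

End Perturbation.

Section Calabi.
Variable R : realType.
Implicit Types (n : nat).

Lemma quadratic_opposite_roots (b c d : R) : 0 < b -> d < 0 ->
  exists s1 s2, [/\ s1 < 0 < s2, b + 2 * c * s1 + d * s1 ^+ 2 = 0
                                 & b + 2 * c * s2 + d * s2 ^+ 2 = 0].
Proof.
move=> b0 d0; pose r := Num.sqrt (c ^+ 2 - b * d).
have r2 : r ^+ 2 = c ^+ 2 - b * d by rewrite sqr_sqrtr //; nra.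
have r0 : 0 <= r := sqrtr_ge0 _.
have d0' : d != 0 by rewrite lt_eqF.
have root s : (d * s + c) ^+ 2 = r ^+ 2 -> b + 2 * c * s + d * s ^+ 2 = 0.
  move=> h; apply: (mulfI d0'); rewrite mulr0.
  by transitivity ((d * s + c) ^+ 2 - r ^+ 2); [rewrite r2; ring | rewrite h subrr].
exists ((r - c) / d), ((- r - c) / d); split.
- have c2r2 : c ^+ 2 < r ^+ 2 by rewrite r2; nra.
  have rc : c < r by rewrite ltNge; apply/negP => ?; nra.
  have rNc : - c < r by rewrite ltNge; apply/negP => ?; nra.
  by rewrite ltr_ndivrMr // ltr_ndivlMr // !mul0r; apply/andP; split; lra.
- by apply: root; rewrite mulrC divfK // subrK.
- by apply: root; rewrite mulrC divfK // subrK sqrrN.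
Qed.

(* For [q s = b + 2 c s + d s^2] and [f s = a + 2 al s + a' s^2], the function
   [d f - a' q] is affine and negative at both roots of [q]; these have
   opposite signs, so its value [d a - a' b] at [0] is negative too. *)
Lemma quadratic_root_ratio_lt (a a' al b c d : R) : 0 < b -> d < 0 ->
  (forall s, b + 2 * c * s + d * s ^+ 2 = 0 -> 0 < a + 2 * al * s + a' * s ^+ 2) ->
  a * d < a' * b.
Proof.
move=> b0 d0 fpos; have [s1 [s2 [/andP[s1_lt0 s2_gt0] q1 q2]]] := quadratic_opposite_roots c b0 d0.
have g1 := fpos _ q1; have g2 := fpos _ q2.
have e : (d * a - a' * b) * (s2 - s1)
  = s2 * (d * (a + 2 * al * s1 + a' * s1 ^+ 2) - a' * (b + 2 * c * s1 + d * s1 ^+ 2))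
  - s1 * (d * (a + 2 * al * s2 + a' * s2 ^+ 2) - a' * (b + 2 * c * s2 + d * s2 ^+ 2)).
  by ring.
rewrite q1 q2 !mulr0 !subr0 in e.
have h1 : s2 * (d * (a + 2 * al * s1 + a' * s1 ^+ 2)) < 0.
  by rewrite pmulr_rlt0 // nmulr_rlt0.
have h2 : 0 < s1 * (d * (a + 2 * al * s2 + a' * s2 ^+ 2)).
  by rewrite nmulr_rgt0 // nmulr_rlt0.
have : (d * a - a' * b) * (s2 - s1) < 0 by rewrite e; lra.
by rewrite pmulr_llt0 ?subr_gt0 ?(lt_trans s1_lt0 s2_gt0) //; lra.
Qed.

Lemma qform_ratio_lt n (A B : 'M[R]_n) x y : symmx A -> symmx B ->
  (forall z, z != 0 -> qform B z = 0 -> 0 < qform A z) ->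
  qform B x < 0 -> 0 < qform B y -> qform A x / qform B x < qform A y / qform B y.
Proof.
move=> sA sB Apos Bx By.
have qE M : symmx M -> forall s,
    qform M (y + s *: x) = qform M y + 2 * bform M y x * s + qform M x * s ^+ 2.
  by move=> sM s; rewrite qformD // qformZ bformZr; ring.
have : qform A y * qform B x < qform A x * qform B y.
  apply: (quadratic_root_ratio_lt (al := bform A y x) (c := bform B y x) By Bx).
  move=> s Bs; rewrite -qE //.
  apply: Apos; last by rewrite qE.
  apply/eqP => yx0; have yE : y = - (s *: x) by apply/eqP; rewrite -subr_eq0 opprK yx0.
  move: By; rewrite yE qformN qformZ.
  by have := sqr_ge0 s; nra.
by move=> h; rewrite ltr_pdivlMr // mulrAC ltr_ndivrMr //; lra.
Qed.

(* By [qform_segment_root], [qform S] has constant sign on [ker P] minus [0]. *)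
Lemma psd_perturb_posdef n (P S : 'M[R]_n) : psd P -> symmx S ->
  (forall x, x != 0 -> P *m x = 0 -> qform S x != 0) ->
  exists e : R, posdef (P + e *: S).
Proof.
move=> Ppsd sS S0.
have [[v [v0 [Pv Sv]]]|Sneg] :=
    classic (exists v, v != 0 /\ P *m v = 0 /\ qform S v < 0).
  have [|e] := psd_add_posdef Ppsd (symmxN sS) (S := - S).
    move=> y y0 Py; rewrite qformNm oppr_gt0.
    have := S0 y y0 Py; case: ltrgtP => // Sy _.
    have [s [Sz z0]] := qform_segment_root Sy Sv.
    have := S0 _ z0; rewrite Sz eqxx; apply.
    by rewrite mulmxDr -scalemxAr mulmxBr Py Pv subrr scaler0 addr0.
  by exists (- e); rewrite scaleNr -scalerN.
apply: psd_add_posdef => // y y0 Py.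
have := S0 y y0 Py; case: ltrgtP => // Sy _.
by case: Sneg; exists y.
Qed.

(* [A - t B] is positive semidefinite for [t] the supremum of [qform A / qform B]
   over [qform B < 0]; its null vectors are not [B]-null, so it can be
   perturbed along [B]. *)
Lemma posdef_comb_of_null_cone_pos n (A B : 'M[R]_n) : symmx A -> symmx B ->
  (forall z, z != 0 -> qform B z = 0 -> 0 < qform A z) ->
  (exists u, qform B u < 0) -> (exists w, 0 < qform B w) ->
  exists s : R, posdef (A + s *: B).
Proof.
move=> sA sB Apos [u Bu] [w Bw].
pose E (r : R) := exists2 x, qform B x < 0 & r = qform A x / qform B x.
have Eub y : 0 < qform B y -> ubound E (qform A y / qform B y).
  by move=> By _ [x Bx ->]; apply/ltW/qform_ratio_lt.
have Esup : has_sup E.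
  by split; [exists (qform A u / qform B u), u | exists (qform A w / qform B w); exact: Eub].
pose t := sup E.
have sP : symmx (A + (- t) *: B) by rewrite -[A]scale1r; apply: symmx_comb.
have Ppsd : psd (A + (- t) *: B).
  split=> // x; rewrite -/(bform _ _ _) -/(qform _ _) -[A]scale1r qform_comb.
  rewrite mul1r mulNr subr_ge0; case: (ltrgtP (qform B x) 0) => Bx.
  - by rewrite -ler_ndivrMr //; apply: sup_upper_bound => //; exists x.
  - by rewrite -ler_pdivlMr //; apply: ge_sup => //; [case: Esup | exact: Eub].
  - rewrite Bx mulr0; have [->|x0] := eqVneq x 0; first by rewrite qform0.
    exact/ltW/Apos.
have [e PSpd] : exists e : R, posdef (A + (- t) *: B + e *: B).
  apply: psd_perturb_posdef => // x x0 Px; apply/eqP => Bx.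
  have : qform (A + (- t) *: B) x = 0 by rewrite /qform bform_kerr.
  rewrite -[A]scale1r qform_comb Bx mulr0 addr0 mul1r => Ax.
  by have := Apos x x0 Bx; rewrite Ax ltxx.
by exists (e - t); rewrite [e - t]addrC scalerDl addrA.
Qed.

Theorem calabi_posdef_comb n (A B : 'M[R]_n) : (2 < n)%N -> symmx A -> symmx B ->
  (forall z, qform A z = 0 -> qform B z = 0 -> z = 0) ->
  exists mu sg : R, posdef (mu *: A + sg *: B).
Proof.
move=> n2 sA sB nc.
have A0 x : x != 0 -> qform B x = 0 -> qform A x != 0.
  by move=> x0 Bx; apply: contra x0 => /eqP Ax; apply/eqP; apply: nc.
have Bker x : x != 0 -> B *m x = 0 -> qform A x != 0.
  by move=> x0 Bx; apply: A0 x0 _; rewrite /qform bform_kerr.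
have [Bpsd|/not_all_ex_not [u /negP]] := classic (forall x, 0 <= qform B x).
  have [e PSpd] := psd_perturb_posdef (conj sB Bpsd) sA Bker.
  by exists e, 1; rewrite scale1r addrC.
rewrite -ltNge => Bu.
have [Bnsd|/not_all_ex_not [w /negP]] := classic (forall x, qform B x <= 0).
  have NBpsd : psd (- B).
    by split=> [|x]; [exact: symmxN | rewrite -/(bform _ _ _) -/(qform _ _) qformNm oppr_ge0].
  have [|e PSpd] := psd_perturb_posdef NBpsd sA.
    by move=> x x0; rewrite mulNmx => /eqP; rewrite oppr_eq0 => /eqP; apply: Bker.
  by exists e, (-1); rewrite scaleN1r addrC.
rewrite -ltNge => Bw.
have [[z [Bz Az]]|Apos] := classic (exists z, qform B z = 0 /\ qform A z < 0).
  have [|s PSpd] := posdef_comb_of_null_cone_pos (symmxN sA) sB _ (ex_intro _ u Bu) (ex_intro _ w Bw).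
    move=> y y0 By; rewrite qformNm oppr_gt0; have := A0 y y0 By.
    case: ltrgtP => // Ay _; case: (null_cone_sign_constant n2 sB nc By Bz Ay Az).
  by exists (-1), s; rewrite scaleN1r.
have [|s PSpd] := posdef_comb_of_null_cone_pos sA sB _ (ex_intro _ u Bu) (ex_intro _ w Bw).
  move=> y y0 By; have := A0 y y0 By; case: ltrgtP => // Ay _.
  by case: Apos; exists y.
by exists 1, s; rewrite scale1r.
Qed.

End Calabi.

Lemma sub_NAB (R : realType) n (A B : 'M[R]_n) (v : 'cV[R]_n) :
  (v^T <= NAB A B)%MS = (A *m v == 0) && (B *m v == 0).
Proof.
have kerE (M : 'M[R]_n) : (v^T <= kermx M^T)%MS = (M *m v == 0).
  by apply/sub_kermxP/eqP => Mv; apply: trmx_inj; rewrite trmx_mul ?trmxK Mv trmx0.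
by rewrite sub_capmx !kerE.
Qed.

Section CommonKernelComplement.
Variables (R : realType) (n k : nat) (A B : 'M[R]_n) (U : 'M[R]_(n, k)).
Hypotheses (rankU : \rank U = k)
  (U_orth : forall w : 'cV[R]_n,
     (forall v : 'cV[R]_n, Nset A v -> Nset B v -> w^T *m v = 0) <->
     (exists c : 'cV[R]_k, w = U *m c)).

Lemma rankU_inj (c : 'cV[R]_k) : U *m c = 0 -> c = 0.
Proof.
have Ufree : row_free U^T by rewrite /row_free mxrank_tr rankU.
move=> Uc; apply/trmx_inj; rewrite trmx0; apply/eqP.
by rewrite -(mulmx_free_eq0 _ Ufree) -trmx_mul Uc trmx0.
Qed.

Lemma range_common_kernel_eq0 (c : 'cV[R]_k) : A *m (U *m c) = 0 -> B *m (U *m c) = 0 -> U *m c = 0.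
Proof.
move=> Aw Bw; apply: qform1_eq0; rewrite /qform /bform mulmx1.
by rewrite (proj2 (U_orth (U *m c)) (ex_intro _ c erefl) _ Aw Bw) mxE.
Qed.

Lemma common_kernel_codim : (n - \rank (NAB A B) <= k)%N.
Proof.
rewrite -(mxrank_tr (NAB A B)) -mxrank_ker -rankU -(mxrank_tr U); apply: mxrankS.
apply/row_subP => i; set u := row i _.
have uN : u *m (NAB A B)^T = 0 by apply/sub_kermxP; exact: row_sub.
have [c uE] : exists c, u^T = U *m c.
  apply/U_orth => v Av Bv; have /submxP [d vE] : (v^T <= NAB A B)%MS.
    by rewrite sub_NAB Av Bv !eqxx.
  by rewrite trmxK -[v]trmxK vE trmx_mul mulmxA uN mul0mx.
by apply/submxP; exists c^T; rewrite -trmx_mul -uE trmxK.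
Qed.

Lemma range_common_kernel_decomp (v : 'cV[R]_n) :
  exists a z, v = U *m a + z /\ A *m z = 0 /\ B *m z = 0.
Proof.
have NAB0 (u : 'rV[R]_n) : (u <= U^T)%MS -> (u <= NAB A B)%MS -> u = 0.
  move=> /submxP [c ->]; rewrite -[X in (X <= _)%MS]trmxK sub_NAB.
  case/andP => /eqP Ac /eqP Bc; apply: trmx_inj; rewrite trmx0.
  by move: Ac Bc; rewrite !trmx_mul trmxK; exact: range_common_kernel_eq0.
have rk : (n <= \rank U^T + \rank (NAB A B))%N.
  by have := common_kernel_codim; rewrite mxrank_tr rankU; lia.
have [a [b vE]] := addsmx_decomp rk NAB0 v^T.
have := submxMl b (NAB A B); rewrite -[b *m _]trmxK sub_NAB => /andP[/eqP Az /eqP Bz].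
exists a^T, (b *m NAB A B)^T; split => //.
by rewrite -[v]trmxK vE linearD /= trmx_mul trmxK.
Qed.

Lemma restricted_no_common_zero :
  (forall v : 'cV[R]_n, (Qset A v /\ Qset B v) <-> (Nset A v /\ Nset B v)) ->
  forall c : 'cV[R]_k, qform (U^T *m A *m U) c = 0 -> qform (U^T *m B *m U) c = 0 -> c = 0.
Proof.
move=> QN c; rewrite !qform_congr => Ac Bc; apply/rankU_inj.
have QE M : qform M (U *m c) = 0 -> Qset M (U *m c).
  by move=> h; apply/matrixP => i j; rewrite !ord1 [RHS]mxE; exact: h.
by have [Aw Bw] := proj1 (QN _) (conj (QE _ Ac) (QE _ Bc)); apply: range_common_kernel_eq0.
Qed.

(* On [v = U a + z] with [z] a common null vector, [qform P v = qform P' a]. *)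
Lemma psd_comb_of_restricted_posdef mu sg : symmx A -> symmx B ->
  posdef (mu *: (U^T *m A *m U) + sg *: (U^T *m B *m U)) ->
  psd (mu *: A + sg *: B) /\
  (forall x, qform (mu *: A + sg *: B) x = 0 -> A *m x = 0 /\ B *m x = 0).
Proof.
set P := mu *: A + sg *: B => sA sB [_ Ppd].
have sP : symmx P by apply: symmx_comb.
have qE a z : A *m z = 0 -> B *m z = 0 ->
    qform P (U *m a + z) = qform (U^T *m P *m U) a.
  move=> Az Bz; have Pz : P *m z = 0 by rewrite mulmxDl -!scalemxAl Az Bz !scaler0 addr0.
  by rewrite qformD // /qform !(bform_kerr _ Pz) mulr0 !addr0; exact/esym/qform_congr.
have {}Ppd a : a != 0 -> 0 < qform (U^T *m P *m U) a.
  by rewrite -comb_congr; apply: Ppd.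
split.
  split=> // v; have [a [z [-> [Az Bz]]]] := range_common_kernel_decomp v.
  rewrite -/(bform _ _ _) -/(qform _ _) qE //.
  by have [->|a0] := eqVneq a 0; [rewrite qform0 | exact/ltW/Ppd].
move=> x; have [a [z [-> [Az Bz]]]] := range_common_kernel_decomp x; rewrite qE //.
have [->|a0 Pa] := eqVneq a 0; first by rewrite mulmx0 add0r.
by have := Ppd a a0; rewrite Pa ltxx.
Qed.

End CommonKernelComplement.

Theorem theorem4 (R : realType) (n k : nat) (A B : 'M[R]_n) (U : 'M[R]_(n, k)) :
  symmx A -> symmx B ->
  (forall v : 'cV[R]_n, (Qset A v /\ Qset B v) <-> (Nset A v /\ Nset B v)) ->
  (\rank (NAB A B) + 3 <= n)%N ->
  (* the columns of U form a basis of the orthogonal complement of N(A) cap N(B) *)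
  \rank U = k ->
  (forall w : 'cV[R]_n,
     (forall v : 'cV[R]_n, Nset A v -> Nset B v -> w^T *m v = 0) <->
     (exists c : 'cV[R]_k, w = U *m c)) ->
  (exists p : R * R, II_pd (U^T *m A *m U) (U^T *m B *m U) p) /\
  (exists p : R * R, II_psd A B p) /\
  sim_diag_congr A B.
Proof.
move=> sA sB QN rankNAB rankU U_orth.
have k3 : (2 < k)%N by have := common_kernel_codim rankU U_orth; lia.
have [mu [sg Ppd]] := calabi_posdef_comb k3 (symmx_congr U sA) (symmx_congr U sB)
  (restricted_no_common_zero rankU U_orth QN).
have [Ppsd Pker] := psd_comb_of_restricted_posdef rankU U_orth sA sB Ppd.
split; first by exists (mu, sg).
split; first by exists (mu, sg).
exact: sim_diag_congr_psd_comb sA sB Ppsd Pker.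
Qed.
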